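(* Let $\{f_j^\lambda\}$ be a parametrized IFS satisfying (MA1)–(MA4) and (MT) (with constant $\eta$) on $U\subset\mathbb R^d$. Then for every $\lambda_0\in U$ there exists an open ball $B(\lambda_0,\varepsilon_0)\subset U$ such that for every $\omega,\tau\in\Sigma$ with $\omega_1\ne\tau_1$ there is a unit vector $e\in\mathbb R^d$ such that for every $p\in B(0,\varepsilon_0)\cap\mathrm{span}(e)^\perp$ and every $t\in J_p=\{t\in\mathbb R:p+te\in B(0,\varepsilon_0)\}$, $$|\Pi^{\lambda_0+p+te}(\omega)-\Pi^{\lambda_0+p+te}(\tau)|<\eta/2\implies\Big|\tfrac{d}{dt}\big(\Pi^{\lambda_0+p+te}(\omega)-\Pi^{\lambda_0+p+te}(\tau)\big)\Big|\ge\eta/2.$$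
   Context: Setup: $X\subset\mathbb R$ compact interval, $\mathcal A=\{1,\dots,m\}$, $\Sigma=\mathcal A^{\mathbb N}$, $\omega_1$ the first symbol of $\omega$, $f^\lambda_\omega$ compositions, $\Pi^\lambda(\mathbf i)=\lim_nf^\lambda_{\mathbf i|_n}(x)$. $U\subset\mathbb R^d$ bounded open. (MA1)–(MA4), $\delta\in(0,1)$: $f^\lambda_j$ is $C^{2+\delta}$ in $x$, $C^{1+\delta}$ in $\lambda$, with continuous mixed partials $\partial^2 f/\partial x\partial\lambda_i$, these derivatives uniformly bounded and uniformly $\delta$-Hölder in $x$ and $\lambda$; $0<\gamma_1\le|\frac d{dx}f^\lambda_j|\le\gamma_2<1$. (MT): there is $\eta>0$ such that for all $\lambda\in\overline U$ and $\mathbf i,\mathbf j$ with $i_1\ne j_1$, $|\Pi^\lambda(\mathbf i)-\Pi^\lambda(\mathbf j)|<\eta\Rightarrow|\nabla_\lambda(\Pi^\lambda(\mathbf i)-\Pi^\lambda(\mathbf j))|\ge\eta$. *)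

From HB Require Import structures.
From mathcomp Require Import all_boot all_order all_algebra.
From mathcomp Require Import all_classical all_reals all_analysis.
Set Implicit Arguments. Unset Strict Implicit. Unset Printing Implicit Defensive.
Import Order.TTheory GRing.Theory Num.Theory.
Import numFieldNormedType.Exports.
Local Open Scope classical_set_scope.
Local Open Scope ring_scope.

Section Defs.
Variables (R : realType) (d m : nat).

Definition edot (u v : 'rV[R]_d) : R := \sum_(i < d) u 0 i * v 0 i.
Definition enorm (u : 'rV[R]_d) : R := Num.sqrt (edot u u).

Definition ebasis (i : 'I_d) : 'rV[R]_d := delta_mx 0 i.

Definition grad (g : 'rV[R]_d -> R) (lam : 'rV[R]_d) : 'rV[R]_d :=
  \row_(i < d) ('D_(ebasis i) g lam).

(* the IFS: f j lam x = f_j^lam(x), j in A = 'I_m *)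
Variable f : 'I_m -> 'rV[R]_d -> R -> R.

(* f^lam_{w|n}(x) = f^lam_{w_1} o ... o f^lam_{w_n} (x), with w_1 = w 0 *)
Fixpoint fcomp (lam : 'rV[R]_d) (w : nat -> 'I_m) (n : nat) (x : R) : R :=
  match n with
  | 0 => x
  | n'.+1 => fcomp lam w n' (f (w n') lam x)
  end.

Definition Pi (x0 : R) (lam : 'rV[R]_d) (w : nat -> 'I_m) : R :=
  limn (fun n => fcomp lam w n x0).

Definition Dx (j : 'I_m) (lam : 'rV[R]_d) (x : R) : R := derive1 (f j lam) x.
Definition Dxx (j : 'I_m) (lam : 'rV[R]_d) (x : R) : R := derive1 (Dx j lam) x.
Definition Dl (i : 'I_d) (j : 'I_m) (lam : 'rV[R]_d) (x : R) : R :=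
  'D_(ebasis i) (fun l => f j l x) lam.
Definition Dxl (i : 'I_d) (j : 'I_m) (lam : 'rV[R]_d) (x : R) : R :=
  'D_(ebasis i) (fun l => Dx j l x) lam.

Definition bounded_on (V : set 'rV[R]_d) (a b C : R) (g : 'rV[R]_d -> R -> R) :=
  forall lam x, V lam -> a <= x <= b -> `|g lam x| <= C.
Definition hoelder_on (V : set 'rV[R]_d) (a b C delta : R)
  (g : 'rV[R]_d -> R -> R) :=
  (forall lam x y, V lam -> a <= x <= b -> a <= y <= b ->
     `|g lam x - g lam y| <= C * powR `|x - y| delta) /\
  (forall lam mu x, V lam -> V mu -> a <= x <= b ->
     `|g lam x - g mu x| <= C * powR (enorm (lam - mu)) delta).

(* (MA1)-(MA4) on the compact interval X = [a,b], parameters in V *)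
Definition MA (V : set 'rV[R]_d) (a b delta gamma1 gamma2 : R) : Prop :=
  [/\ (forall j lam x, V lam -> a <= x <= b -> a <= f j lam x <= b),
      (forall j lam x, V lam -> a <= x <= b ->
          derivable (f j lam) x 1 /\ derivable (Dx j lam) x 1 /\
          forall i, derivable (fun l => f j l x) lam (ebasis i) /\
                    derivable (fun l => Dx j l x) lam (ebasis i)),
      (exists C, forall j,
          [/\ bounded_on V a b C (Dx j), bounded_on V a b C (Dxx j),
              hoelder_on V a b C delta (Dxx j) &
              forall i, [/\ bounded_on V a b C (Dl i j), bounded_on V a b C (Dxl i j),
                            hoelder_on V a b C delta (Dl i j) &
                            hoelder_on V a b C delta (Dxl i j)]]) &
      (forall j lam x, V lam -> a <= x <= b ->
          gamma1 <= `|Dx j lam x| <= gamma2)].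

Definition MT (U : set 'rV[R]_d) (a eta : R) : Prop :=
  forall lam (w t : nat -> 'I_m), closure U lam -> w 0%N != t 0%N ->
    `|Pi a lam w - Pi a lam t| < eta ->
    enorm (grad (fun l => Pi a l w - Pi a l t) lam) >= eta.

End Defs.

From HB Require Import structures.
From mathcomp Require Import all_boot all_order all_algebra.
From mathcomp Require Import all_classical all_reals all_analysis.
From mathcomp Require Import ring lra.
Set Implicit Arguments. Unset Strict Implicit. Unset Printing Implicit Defensive.
Import Order.TTheory GRing.Theory Num.Theory.
Import numFieldNormedType.Exports.
Local Open Scope classical_set_scope.
Local Open Scope ring_scope.

(* Since the maps f_j^lam are uniform contractions, Pi^lam(w) = f_{w_1}(Pi^lam(sigma w))
   and its formal lambda-derivative solves the contracting chain-rule recursion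
   dPi(w) = d_lam f_{w_1}(Pi(sigma w)) + f_{w_1}'(Pi(sigma w)) dPi(sigma w).
   Geometric-series estimates give that Pi is Lipschitz in lambda, that the solution
   dPi of the recursion is Hoelder continuous in lambda, and that it is the derivative
   of Pi along every line.  Now fix w, t with w_1 <> t_1 and F := Pi(w) - Pi(t).
   If |F(lam0)| < eta, (MT) gives |grad F(lam0)| >= eta; along the direction
   e := grad F(lam0) / |grad F(lam0)| the derivative of F equals |grad F(lam0)| at lam0,
   hence stays >= eta/2 on a small ball by Hoelder continuity.  If |F(lam0)| >= eta,
   the Lipschitz bound keeps |F| >= eta/2 on a small ball and any unit e works. *)

Section Geometric.
Variable R : realType.

Lemma ler_add_geometric (x y c q : R) : 0 <= q < 1 ->
  (forall n, x <= y + c * q ^+ n) -> x <= y.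
Proof.
move=> /andP[q0 q1] H.
have h : (fun n => y + c * q ^+ n) @ \oo --> y.
  rewrite -[X in _ --> X]addr0; apply: cvgD; first exact: cvg_cst.
  rewrite -(mulr0 c); apply: cvgMl_tmp; apply: cvg_expr.
  by rewrite ger0_norm.
rewrite -(cvg_lim _ h) //; apply: limr_ge; first by apply/cvg_ex; exists y.
by near=> n; apply: H.
Unshelve. all: by end_near.
Qed.

Lemma contraction_bound (T : Type) (next : T -> T) (P : T -> R) (A M q : R) :
  0 <= q < 1 -> 0 <= A -> (forall t, P t <= M) ->
  (forall t, P t <= A + q * P (next t)) -> forall t, P t <= A / (1 - q).
Proof.
move=> /andP[q0 q1] A0 HM Hr.
have q1' : 0 < 1 - q by rewrite subr_gt0.
have key : forall n t, P t <= A * (1 - q ^+ n) / (1 - q) + M * q ^+ n.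
  elim=> [|n IH] t; first by rewrite expr0 subrr mulr0 mul0r add0r mulr1.
  apply: (le_trans (Hr t)).
  apply: le_trans (_ : A + q * (A * (1 - q ^+ n) / (1 - q) + M * q ^+ n) <= _).
    by rewrite lerD2l; apply: ler_wpM2l.
  rewrite le_eqVlt; apply/orP; left; apply/eqP; rewrite exprS.
  by field; rewrite subr_eq0 eq_sym lt_eqF.
move=> t; apply: (@ler_add_geometric _ _ M q); first by rewrite q0.
move=> n; apply: (le_trans (key n t)); rewrite lerD2r.
rewrite ler_pdivrMr // divfK ?gt_eqF //.
rewrite -[X in _ <= X]mulr1; apply: ler_wpM2l => //.
by rewrite gerBl exprn_ge0.
Qed.

Lemma cvgn_geometric_increments (u : R ^nat) (lo c q : R) : 0 <= q < 1 -> 0 <= c ->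
  (forall n, lo <= u n) -> (forall n, `|u n.+1 - u n| <= c * q ^+ n) -> cvgn u.
Proof.
move=> /andP[q0 q1] c0 Hlo Hd.
have q1' : 0 < 1 - q by rewrite subr_gt0.
set k := c / (1 - q).
have k0 : 0 <= k by rewrite divr_ge0 // ltW.
pose v n := u n + k * q ^+ n.
have vS n : v n.+1 <= v n.
  have h1 := le_trans (ler_norm _) (Hd n).
  have e : k * q ^+ n - k * q ^+ n.+1 = c * q ^+ n.
    by rewrite /k exprS; field; rewrite subr_eq0 eq_sym lt_eqF.
  rewrite /v; lra.
have vdec : {homo v : n m / (n <= m)%N >-> m <= n}.
  move=> n m /subnK <-; elim: (m - n)%N => [|p IH]; first by rewrite add0n.
  by rewrite addSn; apply: le_trans (vS _) IH.
have vlb : has_lbound (range v).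
  exists lo => _ [n _ <-]; rewrite /v -[lo]addr0; apply: lerD => //.
  by rewrite mulr_ge0 // exprn_ge0.
have cv : cvgn v by apply/cvg_ex; eexists; apply: nonincreasing_cvgn.
have cg : cvgn (fun n => k * q ^+ n).
  apply/cvg_ex; exists (k * 0); apply: cvgMl_tmp; apply: cvg_expr.
  by rewrite ger0_norm.
have -> : u = v - (fun n => k * q ^+ n).
  by apply/funext => n; rewrite /v /= addrK.
exact: is_cvgB.
Qed.

End Geometric.

Section Norms.
Variables (R : realType) (d : nat).
Implicit Types u v : 'rV[R]_d.

Definition l1norm v : R := \sum_(i < d) `|v 0 i|.

Lemma l1norm_ge0 v : 0 <= l1norm v.
Proof. by apply: sumr_ge0 => i _. Qed.

Lemma coord_le_l1norm v i : `|v 0 i| <= l1norm v.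
Proof.
rewrite /l1norm (bigD1 i) //= lerDl; by apply: sumr_ge0.
Qed.

Lemma edot_ge0 v : 0 <= edot v v.
Proof. by apply: sumr_ge0 => i _; rewrite -expr2 sqr_ge0. Qed.

Lemma coord_le_enorm v i : `|v 0 i| <= enorm v.
Proof.
rewrite /enorm -sqrtr_sqr; rewrite ler_sqrt ?edot_ge0 //.
rewrite /edot (bigD1 i) //= expr2 lerDl; apply: sumr_ge0 => j _.
by rewrite -expr2 sqr_ge0.
Qed.

Lemma enorm_le_l1norm v : enorm v <= l1norm v.
Proof.
rewrite /enorm -(ger0_norm (l1norm_ge0 v)) -sqrtr_sqr ler_sqrt ?sqr_ge0 //.
rewrite expr2 /edot mulr_suml; apply: ler_sum => i _.
apply: le_trans (ler_norm _) _; rewrite normrM.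
apply: ler_wpM2l => //; exact: coord_le_l1norm.
Qed.

Lemma l1norm_le_enorm v : l1norm v <= d%:R * enorm v.
Proof.
apply: le_trans (_ : \sum_(i < d) enorm v <= _).
  by apply: ler_sum => i _; exact: coord_le_enorm.
by rewrite sumr_const card_ord mulr_natl.
Qed.

Lemma l1normD u v : l1norm (u + v) <= l1norm u + l1norm v.
Proof.
rewrite /l1norm -big_split /=; apply: ler_sum => i _; rewrite mxE; exact: ler_normD.
Qed.

Lemma l1normZ (c : R) v : l1norm (c *: v) = `|c| * l1norm v.
Proof. by rewrite /l1norm mulr_sumr; apply: eq_bigr => i _; rewrite mxE normrM. Qed.

Lemma l1normN v : l1norm (- v) = l1norm v.
Proof. by rewrite /l1norm; apply: eq_bigr => i _; rewrite mxE normrN. Qed.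

Lemma l1norm_distC u v : l1norm (u - v) = l1norm (v - u).
Proof. by rewrite -l1normN opprB. Qed.

Lemma l1norm_le u v : (forall i, `|u 0 i| <= `|v 0 i|) -> l1norm u <= l1norm v.
Proof. by move=> H; apply: ler_sum => i _. Qed.
Lemma l1norm0 : l1norm (0 : 'rV[R]_d) = 0.
Proof. by rewrite /l1norm big1 // => i _; rewrite mxE normr0. Qed.


Lemma norm_sum_coord_le (w : 'rV[R]_d) (g : 'I_d -> R) (K : R) :
  (forall i, `|g i| <= K) -> `|\sum_(i < d) w 0 i * g i| <= l1norm w * K.
Proof.
move=> H; apply: le_trans (ler_norm_sum _ _ _) _.
rewrite /l1norm mulr_suml; apply: ler_sum => i _; rewrite normrM.
by apply: ler_wpM2l.
Qed.

Lemma edotZl (c : R) u v : edot (c *: u) v = c * edot u v.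
Proof. by rewrite /edot mulr_sumr; apply: eq_bigr => i _; rewrite mxE mulrA. Qed.

Lemma edotC u v : edot u v = edot v u.
Proof. by apply: eq_bigr => i _; rewrite mulrC. Qed.

Lemma enormZ (c : R) v : enorm (c *: v) = `|c| * enorm v.
Proof.
rewrite /enorm edotZl edotC edotZl mulrA -expr2 sqrtrM ?sqr_ge0 //.
by rewrite sqrtr_sqr.
Qed.

Lemma enorm_sqr v : enorm v ^+ 2 = edot v v.
Proof. by rewrite /enorm sqr_sqrtr // edot_ge0. Qed.

Lemma ebasisE (i j : 'I_d) : (ebasis R i) 0 j = (i == j)%:R.
Proof. by rewrite /ebasis mxE eqxx /= eq_sym. Qed.

Lemma enorm_ge0 v : 0 <= enorm v.
Proof. by rewrite /enorm sqrtr_ge0. Qed.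

Lemma enorm_ebasis (i : 'I_d) : enorm (ebasis R i) = 1.
Proof.
rewrite /enorm /edot (bigD1 i) //= ebasisE eqxx mulr1 big1 ?addr0 ?sqrtr1 // => j ji.
by rewrite ebasisE (negbTE (_ : i != j)) ?mulr0 // eq_sym.
Qed.

Lemma enorm_normalize v : 0 < enorm v -> enorm ((enorm v)^-1 *: v) = 1.
Proof. by move=> v0; rewrite enormZ ger0_norm ?invr_ge0 ?ltW // mulVf ?gt_eqF. Qed.

Lemma edot_normalize v : 0 < enorm v -> edot ((enorm v)^-1 *: v) v = enorm v.
Proof.
by move=> v0; rewrite edotZl -enorm_sqr expr2 mulrA mulVf ?mul1r ?gt_eqF.
Qed.

Lemma open_l1ball (U : set 'rV[R]_d) x : open U -> U x ->
  exists2 e : R, 0 < e & forall l, l1norm (l - x) < e -> U l.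
Proof.
move=> oU Ux.
have : nbhs x U by apply: open_nbhs_nbhs; split.
move=> /nbhs_ballP [e e0 He]; exists e => // l Hl; apply: (He l).
rewrite mx_norm_ball /ball_ /=; change (mx_norm (x - l) < e).
have [->|n0] := eqVneq (mx_norm (x - l)) 0; first by [].
have [[i j] ->] := mx_norm_neq0 n0.
rewrite /= (ord1 i) !mxE distrC.
by apply: le_lt_trans Hl; have := coord_le_l1norm (l - x) j; rewrite !mxE.
Qed.

End Norms.

Section RealCalculus.
Variable R : realType.

Lemma mvt_between (g dg : R -> R) (x y : R) :
  (forall z, Num.min x y <= z <= Num.max x y -> is_derive z 1 g (dg z)) ->
  exists c, Num.min x y <= c <= Num.max x y /\ g y - g x = dg c * (y - x).
Proof.
move=> H.
have gen : forall u w, u <= w ->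
    (forall z : R, u <= z <= w -> is_derive z 1 g (dg z)) ->
    exists2 c, c \in `[u, w]%R & g w - g u = dg c * (w - u).
  move=> u w uw Hd; apply: MVT_segment => //.
    by move=> z; rewrite in_itv /= => /andP[h1 h2]; apply: Hd; rewrite !ltW.
  apply: derivable_within_continuous => z; rewrite in_itv /= => hz.
  by have [] := Hd z hz.
case: leP H => xy H.
  have [c hc e] := gen x y xy H.
  by exists c; split => //; move: hc; rewrite in_itv.
have yx := ltW xy.
have [c hc e] := gen y x yx H.
exists c; split; first by move: hc; rewrite in_itv.
by rewrite -opprB e -mulrN opprB.
Qed.

Lemma between_in_ab (a b x y z : R) : a <= x <= b -> a <= y <= b ->
  Num.min x y <= z <= Num.max x y -> a <= z <= b.
Proof.
move=> /andP[x1 x2] /andP[y1 y2]; case: (leP x y) => xy /andP[h1 h2]; apply/andP; split; lra.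
Qed.

Lemma between_dist (x y z : R) : Num.min x y <= z <= Num.max x y -> `|z - y| <= `|x - y|.
Proof.
case: (leP x y) => xy /andP[h1 h2].
  rewrite ler0_norm ?subr_le0 // ler0_norm ?subr_le0 //; lra.
rewrite ger0_norm ?subr_ge0 // ger0_norm ?subr_ge0 ?(ltW xy) //; lra.
Qed.

Variable d : nat.

Lemma is_derive_line (F : 'rV[R]_d -> R) (q v : 'rV[R]_d) (t D : R) :
  is_derive (q + t *: v) v F D -> is_derive t 1 (fun s => F (q + s *: v)) D.
Proof.
move=> [dF vF].
have E : (fun h : R => h^-1 *: (((fun s => F (q + s *: v)) \o shift t) (h *: 1)
              - F (q + t *: v))) =
         (fun h : R => h^-1 *: ((F \o shift (q + t *: v)) (h *: v) - F (q + t *: v))).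
  apply/funext => h /=; congr (_ *: (F _ - _)).
  by rewrite /shift /= scaler1 scalerDl addrCA.
split.
  by rewrite /derivable E.
by rewrite /derive E; move: vF; rewrite /derive.
Qed.

Lemma deriveE_derive1 (F : 'rV[R]_d -> R) (x v : 'rV[R]_d) :
  'D_v F x = derive1 (fun s => F (x + s *: v)) 0.
Proof.
have E : (fun h : R => h^-1 *: ((F \o shift x) (h *: v) - F x)) =
  (fun h : R => h^-1 *: ((fun s => F (x + s *: v)) (h + 0) - (fun s => F (x + s *: v)) 0)).
  by apply/funext => h /=; rewrite addr0 scale0r addr0 [h *: v + x]addrC.
by rewrite /derive /derive1 E.
Qed.

End RealCalculus.

Section Coord.
Variables (R : realType) (d : nat) (w : 'rV[R]_d).

Definition row_prefix (k : nat) : 'rV[R]_d :=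
  \row_i (if (i < k)%N then w 0 i else 0).

Lemma row_prefix0 : row_prefix 0 = 0.
Proof. by apply/rowP => i; rewrite !mxE. Qed.

Lemma row_prefix_full : row_prefix d = w.
Proof. by apply/rowP => i; rewrite mxE ltn_ord. Qed.

Lemma row_prefix_lineE (i0 : 'I_d) (s : R) i :
  (row_prefix i0 + s *: ebasis R i0) 0 i =
  (if (i < i0)%N then w 0 i else 0) + s * (i0 == i)%:R.
Proof. by rewrite mxE [X in _ + X]mxE ebasisE mxE. Qed.

Lemma row_prefixS (i0 : 'I_d) :
  row_prefix i0.+1 = row_prefix i0 + w 0 i0 *: ebasis R i0.
Proof.
apply/rowP => i; rewrite row_prefix_lineE mxE ltnS leq_eqVlt.
case: (ltnP i i0) => ik.
  have : i0 != i by apply/negP => /eqP ei; move: ik; rewrite -ei ltnn.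
  by move/negbTE => ->; rewrite mulr0 addr0 orbT.
rewrite orbF add0r; case: (eqVneq i0 i) => [<-|ne]; first by rewrite eqxx mulr1.
have : (i != i0 :> nat).
  by apply/negP => /eqP ei; move: ne; apply/negP; rewrite negbK; apply/eqP/val_inj.
by move/negbTE => ->; rewrite mulr0.
Qed.

Lemma l1norm_row_prefix_line (i0 : 'I_d) (s : R) :
  Num.min 0 (w 0 i0) <= s <= Num.max 0 (w 0 i0) ->
  l1norm (row_prefix i0 + s *: ebasis R i0) <= l1norm w.
Proof.
move=> hs; apply: l1norm_le => i; rewrite row_prefix_lineE.
case: (ltnP i i0) => ik.
  have : i0 != i by apply/negP => /eqP ei; move: ik; rewrite -ei ltnn.
  by move/negbTE => ->; rewrite mulr0 addr0.
case: (eqVneq i0 i) => [<-|ne]; last by rewrite mulr0 addr0 normr0.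
rewrite mulr1 add0r.
case: (leP 0 (w 0 i0)) hs => h /andP[h1 h2].
  by rewrite !ger0_norm //; apply: le_trans h1.
by rewrite (ltr0_norm h) ler0_norm // lerN2.
Qed.

Section MeanValue.
Variables (F : 'rV[R]_d -> R) (DF : 'I_d -> 'rV[R]_d -> R) (lam : 'rV[R]_d).
Hypothesis HD : forall i c, l1norm c <= l1norm w ->
  is_derive (lam + c) (ebasis R i) F (DF i (lam + c)).

Lemma mvt_row_prefix k : (k <= d)%N -> exists c : 'I_d -> 'rV[R]_d,
  (forall i, l1norm (c i) <= l1norm w) /\
  F (lam + row_prefix k) - F lam = \sum_(i < d | (i < k)%N) w 0 i * DF i (lam + c i).
Proof.
elim: k => [|k IH] kd.
  exists (fun _ => 0); split; first by move=> i; rewrite l1norm0 l1norm_ge0.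
  by rewrite row_prefix0 addr0 subrr big_pred0.
have [c [Hc Hs]] := IH (ltnW kd).
pose i0 : 'I_d := Ordinal kd.
pose G s := F ((lam + row_prefix i0) + s *: ebasis R i0).
have [xi [hxi e]] : exists xi, Num.min 0 (w 0 i0) <= xi <= Num.max 0 (w 0 i0) /\
    G (w 0 i0) - G 0 = DF i0 (lam + (row_prefix i0 + xi *: ebasis R i0)) * (w 0 i0 - 0).
  apply: (@mvt_between R G (fun s => DF i0 (lam + (row_prefix i0 + s *: ebasis R i0)))).
  move=> s hs; apply: is_derive_line; rewrite -addrA.
  exact: HD (l1norm_row_prefix_line hs).
exists (fun i => if i == i0 then row_prefix i0 + xi *: ebasis R i0 else c i); split.
  by move=> i; case: eqP => _; [exact: l1norm_row_prefix_line|exact: Hc].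
have -> : row_prefix k.+1 = row_prefix i0 + w 0 i0 *: ebasis R i0 := row_prefixS i0.
rewrite (bigD1 i0) /=; last by rewrite ltnS.
rewrite eqxx.
have -> : \sum_(i < d | (i < k.+1)%N && (i != i0))
    w 0 i * DF i (lam + (if i == i0 then row_prefix i0 + xi *: ebasis R i0 else c i)) =
    \sum_(i < d | (i < k)%N) w 0 i * DF i (lam + c i).
  rewrite (eq_bigl (fun i : 'I_d => (i < k)%N)); last first.
    move=> i; rewrite ltnS leq_eqVlt; case: (eqVneq i i0) => [->|ne] /=.
      by rewrite eqxx ltnn.
    rewrite andbT; have : (i != k :> nat).
      by apply/negP => /eqP ei; move: ne; apply/negP; rewrite negbK; apply/eqP/val_inj.
    by move/negbTE => ->.
  apply: eq_bigr => i ik; case: eqP => // ei; by move: ik; rewrite ei ltnn.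
rewrite -Hs.
have -> : F (lam + (row_prefix i0 + w 0 i0 *: ebasis R i0)) = G (w 0 i0) by rewrite /G addrA.
have -> : F (lam + row_prefix k) = G 0 by rewrite /G scale0r addr0.
have e2 : G (w 0 i0) = DF i0 (lam + (row_prefix i0 + xi *: ebasis R i0)) * (w 0 i0 - 0) + G 0.
  by rewrite -e subrK.
rewrite e2 subr0; ring.
Qed.

Lemma mvt_coordinates : exists c : 'I_d -> 'rV[R]_d,
  (forall i, l1norm (c i) <= l1norm w) /\
  F (lam + w) - F lam = \sum_(i < d) w 0 i * DF i (lam + c i).
Proof.
have [c [Hc Hs]] := mvt_row_prefix (leqnn d).
exists c; split => //; rewrite -{1}row_prefix_full Hs.
by apply: eq_bigl => i; exact: ltn_ord.
Qed.

End MeanValue.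

End Coord.

Section Remainder.
Variables (R : realType) (delta : R).
Hypothesis Hdel : 0 < delta.

Lemma powR_lt_small (e : R) : 0 < e -> exists2 rho : R, 0 < rho &
  forall x, 0 <= x -> x < rho -> powR x delta < e.
Proof.
move=> e0; exists (powR e delta^-1); first by rewrite powR_gt0.
move=> x x0 xr.
have -> : e = powR (powR e delta^-1) delta.
  by rewrite -powRrM mulVf ?gt_eqF // powRr1 // ltW.
by apply: gt0_ltr_powR; rewrite ?nnegrE ?powR_ge0.
Qed.

Lemma derive1_from_remainder (g : R -> R) (s D A B rho : R) : 0 < rho -> 0 <= A -> 0 <= B ->
  (forall h, h != 0 -> `|h| < rho ->
     `|g (h + s) - g s - h * D| <= `|h| * (A * powR `|h| delta + B * `|h|)) ->
  derivable g s 1 /\ derive1 g s = D.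
Proof.
move=> r0 A0 B0 H.
have cv : (fun h => h^-1 *: (g (h + s) - g s)) @ 0^' --> D.
  apply/cvgrPdist_le => e e0.
  have e2 : 0 < e / 2 by rewrite divr_gt0.
  have e3 : 0 < e / 2 / (A + 1) by rewrite divr_gt0 // ltr_wpDl.
  have [r1 r10 Hr1] := powR_lt_small e3.
  have r2 : 0 < e / 2 / (B + 1) by rewrite divr_gt0 // ltr_wpDl.
  near=> h.
  have hn : h != 0 by near: h; exact: nbhs_dnbhs_neq.
  have hr : `|h| < rho by near: h; exact: dnbhs0_lt.
  have h1 : `|h| < r1 by near: h; exact: dnbhs0_lt.
  have h2 : `|h| < e / 2 / (B + 1) by near: h; exact: dnbhs0_lt.
  have hp : 0 < `|h| by rewrite normr_gt0.
  have := H h hn hr.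
  move=> Hb.
  rewrite -[X in `|X| <= _]/(D - h^-1 * (g (h + s) - g s)).
  have -> : D - h^-1 * (g (h + s) - g s) = - (h^-1 * (g (h + s) - g s - h * D)).
    by field.
  rewrite normrN normrM normfV ler_pdivrMl //.
  apply: le_trans Hb _; rewrite ler_pM2l //.
  have p1 : A * powR `|h| delta <= e / 2.
    have := Hr1 _ (normr_ge0 h) h1 => /ltW /(ler_wpM2l A0).
    move/le_trans; apply.
    rewrite mulrCA ger_pMr // ler_pdivrMr ?ltr_wpDl // mul1r lerDl //.
  have p2 : B * `|h| <= e / 2.
    have := ltW h2 => /(ler_wpM2l B0) /le_trans; apply.
    rewrite mulrCA ger_pMr // ler_pdivrMr ?ltr_wpDl // mul1r lerDl //.
  rewrite /= mulrC; lra.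
have E : (fun h : R => h^-1 *: ((g \o shift s) (h *: 1) - g s)) =
         (fun h => h^-1 *: (g (h + s) - g s)).
  by apply/funext => h /=; rewrite /shift /= scaler1.
split.
  by rewrite /derivable E; apply/cvg_ex; exists D.
by rewrite /derive1 (cvg_lim _ cv).
Unshelve. all: by end_near.
Qed.

End Remainder.

Section Regularity.
Variables (R : realType) (d m : nat) (f : 'I_m -> 'rV[R]_d -> R -> R).
Variables (V : set 'rV[R]_d) (a b delta : R).

Definition regularity_bounds (C : R) := forall j,
  [/\ bounded_on V a b C (Dx f j), bounded_on V a b C (Dxx f j),
      hoelder_on V a b C delta (Dxx f j) &
      forall i, [/\ bounded_on V a b C (Dl f i j), bounded_on V a b C (Dxl f i j),
                    hoelder_on V a b C delta (Dl f i j) &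
                    hoelder_on V a b C delta (Dxl f i j)]].

Lemma bounded_on_le (C C' : R) g :
  C <= C' -> bounded_on V a b C g -> bounded_on V a b C' g.
Proof. by move=> CC H l x Vl hx; apply: le_trans (H l x Vl hx) CC. Qed.

Lemma hoelder_on_le (C C' : R) g :
  C <= C' -> hoelder_on V a b C delta g -> hoelder_on V a b C' delta g.
Proof.
move=> CC [H1 H2]; split.
  move=> l x y Vl hx hy; apply: le_trans (H1 l x y Vl hx hy) _.
  by apply: ler_wpM2r => //; exact: powR_ge0.
move=> l mu x Vl Vm hx; apply: le_trans (H2 l mu x Vl Vm hx) _.
by apply: ler_wpM2r => //; exact: powR_ge0.
Qed.

Lemma regularity_bounds_le (C C' : R) :
  C <= C' -> regularity_bounds C -> regularity_bounds C'.
Proof.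
move=> CC HC j; have [h1 h2 h3 h4] := HC j; split.
- exact: bounded_on_le h1.
- exact: bounded_on_le h2.
- exact: hoelder_on_le h3.
move=> i; have [k1 k2 k3 k4] := h4 i; split.
- exact: bounded_on_le k1.
- exact: bounded_on_le k2.
- exact: hoelder_on_le k3.
- exact: hoelder_on_le k4.
Qed.

End Regularity.

Section NaturalProjection.
Variables (R : realType) (d m : nat) (a b : R) (f : 'I_m -> 'rV[R]_d -> R -> R).
Variables (V : set 'rV[R]_d) (delta gamma2 C : R) (lam0 : 'rV[R]_d) (r : R).
Hypothesis Hab : a <= b.
Hypothesis Hdel : 0 < delta.
Hypothesis Hg0 : 0 <= gamma2.
Hypothesis Hg1 : gamma2 < 1.
Hypothesis HC0 : 0 <= C.
Hypothesis Hmap : forall j lam x, V lam -> a <= x <= b -> a <= f j lam x <= b.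
Hypothesis Hder : forall j lam x, V lam -> a <= x <= b ->
          derivable (f j lam) x 1 /\ derivable (Dx f j lam) x 1 /\
          forall i, derivable (fun l => f j l x) lam (ebasis R i) /\
                    derivable (fun l => Dx f j l x) lam (ebasis R i).
Hypothesis HB : regularity_bounds f V a b delta C.
Hypothesis Hgam : forall j lam x, V lam -> a <= x <= b -> `|Dx f j lam x| <= gamma2.
Hypothesis Hr : 0 < r.
(* 3r rather than r: [in_ball_shift] moves a point of the r-ball by up to 2r. *)
Hypothesis Hball : forall l, l1norm (l - lam0) < 3 * r -> V l.

Definition in_ball (l : 'rV[R]_d) := l1norm (l - lam0) < r.

Lemma ler_powR_delta (x y : R) : 0 <= x -> x <= y -> powR x delta <= powR y delta.
Proof. by move=> x0 xy; apply: ge0_ler_powR; rewrite ?nnegrE ?(ltW Hdel) ?(le_trans x0). Qed.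

Lemma is_derive_Dx j lam z : V lam -> a <= z <= b -> is_derive z 1 (f j lam) (Dx f j lam z).
Proof. move=> Vl hz; have [h _] := Hder j Vl hz; rewrite /Dx derive1E; exact: derivableP. Qed.

Lemma is_derive_Dxx j lam z : V lam -> a <= z <= b -> is_derive z 1 (Dx f j lam) (Dxx f j lam z).
Proof. move=> Vl hz; have [_ [h _]] := Hder j Vl hz; rewrite /Dxx derive1E; exact: derivableP. Qed.

Lemma lipschitz_x j lam x y : V lam -> a <= x <= b -> a <= y <= b ->
  `|f j lam x - f j lam y| <= gamma2 * `|x - y|.
Proof.
move=> Vl hx hy.
have [c [hc e]] := @mvt_between R (f j lam) (Dx f j lam) y x
  (fun z hz => is_derive_Dx j Vl (between_in_ab hy hx hz)).
rewrite e normrM; apply: ler_wpM2r => //; apply: Hgam => //.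
exact: between_in_ab hy hx hc.
Qed.

Lemma Dx_lipschitz_x j lam x y : V lam -> a <= x <= b -> a <= y <= b ->
  `|Dx f j lam x - Dx f j lam y| <= C * `|x - y|.
Proof.
move=> Vl hx hy.
have [c [hc e]] := @mvt_between R (Dx f j lam) (Dxx f j lam) y x
  (fun z hz => is_derive_Dxx j Vl (between_in_ab hy hx hz)).
rewrite e normrM; apply: ler_wpM2r => //.
have [_ Bxx _ _] := HB j; apply: Bxx => //; exact: between_in_ab hy hx hc.
Qed.

Lemma taylor_x j lam x y : V lam -> a <= x <= b -> a <= y <= b ->
  `|f j lam x - f j lam y - Dx f j lam y * (x - y)| <= C * `|x - y| ^+ 2.
Proof.
move=> Vl hx hy.
have [c [hc e]] := @mvt_between R (f j lam) (Dx f j lam) y x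
  (fun z hz => is_derive_Dx j Vl (between_in_ab hy hx hz)).
rewrite e -mulrBl normrM expr2 mulrA; apply: ler_wpM2r => //.
apply: le_trans (Dx_lipschitz_x j Vl (between_in_ab hy hx hc) hy) _.
apply: ler_wpM2l => //; apply: between_dist.
by rewrite minC maxC.
Qed.

Lemma in_ball_shift l mu c : in_ball l -> in_ball mu -> l1norm c <= l1norm (mu - l) -> V (l + c).
Proof.
rewrite /in_ball => hl hm hc; apply: Hball.
have h1 : l1norm (mu - l) <= l1norm (mu - lam0) + l1norm (lam0 - l).
  by apply: le_trans (l1normD _ _); rewrite addrA subrK.
have h2 : l1norm (l + c - lam0) <= l1norm (l - lam0) + l1norm c.
  by apply: le_trans (l1normD _ _); rewrite addrAC.
rewrite (l1norm_distC lam0 l) in h1; lra.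
Qed.

Lemma in_ball_V l : in_ball l -> V l.
Proof. by move=> hl; have := @in_ball_shift l l 0 hl hl; rewrite addr0; apply; rewrite subrr. Qed.

Lemma is_derive_Dl j i l x : V l -> a <= x <= b ->
  is_derive l (ebasis R i) (fun l' => f j l' x) (Dl f i j l x).
Proof. move=> Vl hx; have [_ [_ /(_ i) [h _]]] := Hder j Vl hx; exact: derivableP. Qed.

Lemma is_derive_Dxl j i l x : V l -> a <= x <= b ->
  is_derive l (ebasis R i) (fun l' => Dx f j l' x) (Dxl f i j l x).
Proof. move=> Vl hx; have [_ [_ /(_ i) [_ h]]] := Hder j Vl hx; exact: derivableP. Qed.

Lemma lipschitz_l j l mu x : in_ball l -> in_ball mu -> a <= x <= b ->
  `|f j mu x - f j l x| <= C * l1norm (mu - l).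
Proof.
move=> hl hm hx.
have [c [Hc e]] := @mvt_coordinates R d (mu - l) (fun l' => f j l' x) (fun i l' => Dl f i j l' x) l
  (fun i c hc => @is_derive_Dl j i _ _ (in_ball_shift hl hm hc) hx).
rewrite /= [l + (mu - l)]addrC subrK in e; rewrite e mulrC; apply: norm_sum_coord_le => i.
have [_ _ _ /(_ i) [Bl _ _ _]] := HB j; apply: Bl => //; exact: in_ball_shift hl hm (Hc i).
Qed.

Lemma Dx_lipschitz_l j l mu x : in_ball l -> in_ball mu -> a <= x <= b ->
  `|Dx f j mu x - Dx f j l x| <= C * l1norm (mu - l).
Proof.
move=> hl hm hx.
have [c [Hc e]] := @mvt_coordinates R d (mu - l) (fun l' => Dx f j l' x) (fun i l' => Dxl f i j l' x) l
  (fun i c hc => @is_derive_Dxl j i _ _ (in_ball_shift hl hm hc) hx).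
rewrite /= [l + (mu - l)]addrC subrK in e; rewrite e mulrC; apply: norm_sum_coord_le => i.
have [_ _ _ /(_ i) [_ Bl _ _]] := HB j; apply: Bl => //; exact: in_ball_shift hl hm (Hc i).
Qed.

Lemma taylor_l j l mu x : in_ball l -> in_ball mu -> a <= x <= b ->
  `|f j mu x - f j l x - \sum_(i < d) (mu - l) 0 i * Dl f i j l x|
    <= C * l1norm (mu - l) * powR (l1norm (mu - l)) delta.
Proof.
move=> hl hm hx.
have [c [Hc e]] := @mvt_coordinates R d (mu - l) (fun l' => f j l' x) (fun i l' => Dl f i j l' x) l
  (fun i c hc => @is_derive_Dl j i _ _ (in_ball_shift hl hm hc) hx).
rewrite /= [l + (mu - l)]addrC subrK in e; rewrite e -sumrB.
under eq_bigr do rewrite -mulrBr.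
rewrite [C * _]mulrC -mulrA; apply: norm_sum_coord_le => i.
have [_ _ _ /(_ i) [_ _ [_ Hl] _]] := HB j.
apply: le_trans (Hl _ _ _ (in_ball_shift hl hm (Hc i)) (in_ball_V hl) hx) _.
rewrite addrAC subrr add0r; apply: ler_wpM2l => //; apply: ler_powR_delta.
  by rewrite /enorm sqrtr_ge0.
apply: le_trans (enorm_le_l1norm _) (Hc i).
Qed.

Definition shiftw (w : nat -> 'I_m) : nat -> 'I_m := fun k => w k.+1.

Lemma fcompS l w n x : fcomp f l w n.+1 x = f (w 0%N) l (fcomp f l (shiftw w) n x).
Proof. by elim: n x => [|n IH] x //=; rewrite -IH. Qed.

Lemma fcomp_in_ab l w n x : V l -> a <= x <= b -> a <= fcomp f l w n x <= b.
Proof. by move=> Vl; elim: n x => [|n IH] x hx //=; apply: IH; apply: Hmap. Qed.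

Lemma fcomp_contraction l w n x y : V l -> a <= x <= b -> a <= y <= b ->
  `|fcomp f l w n x - fcomp f l w n y| <= gamma2 ^+ n * `|x - y|.
Proof.
move=> Vl; elim: n x y => [|n IH] x y hx hy /=; first by rewrite expr0 mul1r.
apply: le_trans (IH _ _ (Hmap _ Vl hx) (Hmap _ Vl hy)) _.
rewrite exprSr -mulrA; apply: ler_wpM2l; first exact: exprn_ge0.
exact: lipschitz_x.
Qed.

Lemma a_in_ab : a <= a <= b. Proof. by rewrite lexx Hab. Qed.

Lemma Pi_cvg l w : V l -> cvgn (fun n => fcomp f l w n a).
Proof.
move=> Vl; apply: (@cvgn_geometric_increments R _ a (b - a) gamma2); rewrite ?Hg0 ?Hg1 ?subr_ge0 //.
  by move=> n; have /andP[] := fcomp_in_ab w n Vl a_in_ab.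
move=> n /=; apply: le_trans (fcomp_contraction _ _ Vl (Hmap _ Vl a_in_ab) a_in_ab) _.
rewrite mulrC; apply: ler_wpM2r; first exact: exprn_ge0.
have /andP[h1 h2] := Hmap (w n) Vl a_in_ab; rewrite ger0_norm ?subr_ge0 //; lra.
Qed.

Lemma Pi_in_ab l w : V l -> a <= Pi f a l w <= b.
Proof.
move=> Vl; apply/andP; split.
  apply: limr_ge; first exact: Pi_cvg.
  by near=> n; have /andP[] := fcomp_in_ab w n Vl a_in_ab.
apply: limr_le; first exact: Pi_cvg.
by near=> n; have /andP[] := fcomp_in_ab w n Vl a_in_ab.
Unshelve. all: by end_near.
Qed.

Lemma Pi_shift l w : V l -> Pi f a l w = f (w 0%N) l (Pi f a l (shiftw w)).
Proof.
move=> Vl.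
have c1 : (fun n => fcomp f l (shiftw w) n a) @ \oo --> Pi f a l (shiftw w).
  exact: Pi_cvg.
have cont : {for Pi f a l (shiftw w), continuous (f (w 0%N) l)}.
  apply: differentiable_continuous; apply/derivable1_diffP.
  by have [] := Hder (w 0%N) Vl (Pi_in_ab (shiftw w) Vl).
have c2 := continuous_cvg _ cont c1.
have c3 : (fun n => fcomp f l w n a) @ \oo --> f (w 0%N) l (Pi f a l (shiftw w)).
  rewrite -cvg_shiftS.
  have -> : [sequence fcomp f l w n.+1 a]_n =
      (f (w 0%N) l \o fun n => fcomp f l (shiftw w) n a).
    by apply/funext => n; rewrite /= -fcompS.
  exact: c2.
by rewrite /Pi (cvg_lim _ c3).
Qed.

Definition K1 := C / (1 - gamma2).

Lemma one_sub_gamma2_gt0 : 0 < 1 - gamma2. Proof. by rewrite subr_gt0. Qed.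

Lemma K1_ge0 : 0 <= K1. Proof. by rewrite /K1 divr_ge0 // ltW // one_sub_gamma2_gt0. Qed.

Lemma K1_fixpoint : C + gamma2 * K1 = K1.
Proof. by rewrite /K1; field; rewrite subr_eq0 eq_sym lt_eqF. Qed.

Lemma Pi_lipschitz l mu w : in_ball l -> in_ball mu ->
  `|Pi f a mu w - Pi f a l w| <= K1 * l1norm (mu - l).
Proof.
move=> hl hm.
have Vl := in_ball_V hl; have Vm := in_ball_V hm.
have := @contraction_bound R _ shiftw (fun w => `|Pi f a mu w - Pi f a l w|) (C * l1norm (mu - l))
  (b - a) gamma2 _ _ _ _ w.
rewrite /K1 mulrAC; apply; rewrite ?Hg0 ?Hg1 ?mulr_ge0 ?l1norm_ge0 //.
  move=> t; have /andP[h1 h2] := Pi_in_ab t Vl; have /andP[h3 h4] := Pi_in_ab t Vm.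
  rewrite ler_norml; apply/andP; split; lra.
move=> t; rewrite (Pi_shift t Vl) (Pi_shift t Vm).
set y := Pi f a l (shiftw t); set y' := Pi f a mu (shiftw t).
have hy := Pi_in_ab (shiftw t) Vl; have hy' := Pi_in_ab (shiftw t) Vm.
rewrite -[X in `|X|](subrKA (f (t 0%N) l y')).
apply: le_trans (ler_normD _ _) _; apply: lerD.
  exact: lipschitz_l.
exact: lipschitz_x.
Qed.

(* [dPi l i w] is the i-th partial lambda-derivative of Pi^l(w), defined as the limit
   of the truncated chain-rule recursion; [Pi_taylor] shows that it is one. *)
Fixpoint dPin (l : 'rV[R]_d) (i : 'I_d) (n : nat) (w : nat -> 'I_m) : R :=
  match n with
  | 0 => 0
  | n'.+1 => Dl f i (w 0%N) l (Pi f a l (shiftw w))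
             + Dx f (w 0%N) l (Pi f a l (shiftw w)) * dPin l i n' (shiftw w)
  end.

Definition dPi l i w := limn (fun n => dPin l i n w).

Lemma dPin_bound l i n w : V l -> `|dPin l i n w| <= K1.
Proof.
move=> Vl; elim: n w => [|n IH] w /=; first by rewrite normr0 K1_ge0.
have hy := Pi_in_ab (shiftw w) Vl.
apply: le_trans (ler_normD _ _) _; rewrite -K1_fixpoint; apply: lerD.
  by have [_ _ _ /(_ i) [Bl _ _ _]] := HB (w 0%N); apply: Bl.
rewrite normrM; apply: ler_pM => //; exact: Hgam.
Qed.

Lemma dPin_increment l i n w : V l -> `|dPin l i n.+1 w - dPin l i n w| <= C * gamma2 ^+ n.
Proof.
move=> Vl; elim: n w => [|n IH] w.
  rewrite /= mulr0 !addr0 subr0 expr0 mulr1.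
  by have [_ _ _ /(_ i) [Bl _ _ _]] := HB (w 0%N); apply: Bl => //; exact: Pi_in_ab.
rewrite [dPin _ _ n.+2 _]/= [dPin _ _ n.+1 w]/= opprD addrACA subrr add0r -mulrBr.
rewrite normrM exprS mulrCA; apply: ler_pM => //; first by apply: Hgam => //; exact: Pi_in_ab.
exact: IH.
Qed.

Lemma dPi_cvg l i w : V l -> cvgn (fun n => dPin l i n w).
Proof.
move=> Vl; apply: (@cvgn_geometric_increments R _ (- K1) C gamma2); rewrite ?Hg0 ?Hg1 //.
  by move=> n; have := dPin_bound i n w Vl; rewrite ler_norml => /andP[].
by move=> n; exact: dPin_increment.
Qed.

Lemma dPi_bound l i w : V l -> `|dPi l i w| <= K1.
Proof.
move=> Vl; rewrite ler_norml; apply/andP; split.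
  apply: limr_ge; first exact: dPi_cvg.
  by near=> n; have := dPin_bound i n w Vl; rewrite ler_norml => /andP[].
apply: limr_le; first exact: dPi_cvg.
by near=> n; have := dPin_bound i n w Vl; rewrite ler_norml => /andP[].
Unshelve. all: by end_near.
Qed.

Lemma dPi_shift l i w : V l -> dPi l i w =
  Dl f i (w 0%N) l (Pi f a l (shiftw w)) + Dx f (w 0%N) l (Pi f a l (shiftw w)) * dPi l i (shiftw w).
Proof.
move=> Vl.
have c1 : (fun n => dPin l i n (shiftw w)) @ \oo --> dPi l i (shiftw w) by exact: dPi_cvg.
have c3 : (fun n => dPin l i n w) @ \oo --> Dl f i (w 0%N) l (Pi f a l (shiftw w))
     + Dx f (w 0%N) l (Pi f a l (shiftw w)) * dPi l i (shiftw w).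
  rewrite -cvg_shiftS /=; apply: cvgD; first exact: cvg_cst.
  exact: cvgMl_tmp.
by rewrite /dPi (cvg_lim _ c3).
Qed.

Definition K2 := (C + C * powR K1 delta + (C + C * K1) * K1) / (1 - gamma2).

Definition dPi_step_error (t : R) :=
  C * powR t delta + C * powR (K1 * t) delta + (C + C * K1) * t * K1.

Lemma dPi_step_error_ge0 t : 0 <= t -> 0 <= dPi_step_error t.
Proof.
move=> t0; have k := K1_ge0.
have q1 : 0 <= C * powR t delta by rewrite mulr_ge0 ?powR_ge0.
have q2 : 0 <= C * powR (K1 * t) delta by rewrite mulr_ge0 ?powR_ge0.
have q3 : 0 <= (C + C * K1) * t * K1.
  by apply: mulr_ge0 => //; apply: mulr_ge0 => //; apply: addr_ge0 => //; apply: mulr_ge0.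
rewrite /dPi_step_error; lra.
Qed.

Lemma dPi_step_error_le t : 0 <= t ->
  dPi_step_error t / (1 - gamma2) <= K2 * (powR t delta + t).
Proof.
move=> t0.
have pK : powR (K1 * t) delta = powR K1 delta * powR t delta by rewrite powRM ?K1_ge0.
rewrite /K2 mulrAC; apply: ler_wpM2r; first by rewrite invr_ge0 ltW // one_sub_gamma2_gt0.
rewrite /dPi_step_error pK; set P := powR t delta; have P0 : 0 <= P by exact: powR_ge0.
have pk0 : 0 <= powR K1 delta by exact: powR_ge0.
have CK : 0 <= C * K1 by rewrite mulr_ge0 ?K1_ge0.
have CKK : 0 <= (C + C * K1) * K1 by rewrite mulr_ge0 ?addr_ge0 ?K1_ge0.
have CP : 0 <= C * powR K1 delta by rewrite mulr_ge0.
rewrite !mulrDl !mulrDr.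
have e1 : C * (powR K1 delta * P) = C * powR K1 delta * P by rewrite mulrA.
have e3 : C * t * K1 = C * K1 * t by rewrite mulrAC.
have e4 : C * K1 * t * K1 = C * K1 * K1 * t by rewrite mulrAC.
rewrite e1 e3 e4.
have h1 : 0 <= C * t by rewrite mulr_ge0.
have h2 : 0 <= C * powR K1 delta * t by rewrite mulr_ge0.
have h3 : 0 <= C * K1 * P by rewrite mulr_ge0.
have h4 : 0 <= C * K1 * K1 * P by rewrite mulr_ge0 // mulr_ge0 // K1_ge0.
lra.
Qed.

Lemma dPi_step l mu i u : in_ball l -> in_ball mu ->
  `|dPi mu i u - dPi l i u| <= dPi_step_error (l1norm (mu - l))
    + gamma2 * `|dPi mu i (shiftw u) - dPi l i (shiftw u)|.
Proof.
move=> hl hm; have Vl := in_ball_V hl; have Vm := in_ball_V hm.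
set t := l1norm (mu - l).
rewrite (dPi_shift i u Vl) (dPi_shift i u Vm).
set y := Pi f a l (shiftw u); set y' := Pi f a mu (shiftw u).
have hy := Pi_in_ab (shiftw u) Vl; have hy' := Pi_in_ab (shiftw u) Vm.
have dy : `|y' - y| <= K1 * t by exact: Pi_lipschitz.
set L := dPi l i (shiftw u); set L' := dPi mu i (shiftw u).
have -> : Dl f i (u 0%N) mu y' + Dx f (u 0%N) mu y' * L'
      - (Dl f i (u 0%N) l y + Dx f (u 0%N) l y * L) =
      (Dl f i (u 0%N) mu y' - Dl f i (u 0%N) l y') + (Dl f i (u 0%N) l y' - Dl f i (u 0%N) l y)
      + ((Dx f (u 0%N) mu y' - Dx f (u 0%N) l y') + (Dx f (u 0%N) l y' - Dx f (u 0%N) l y)) * L'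
      + Dx f (u 0%N) l y * (L' - L) by ring.
have [_ _ _ /(_ i) [_ _ [Hx Hl] _]] := HB (u 0%N).
apply: le_trans (ler_normD _ _) _; apply: lerD; last first.
  rewrite normrM; apply: ler_pM => //; exact: Hgam.
apply: le_trans (ler_normD _ _) _; rewrite /dPi_step_error; apply: lerD.
  apply: le_trans (ler_normD _ _) _; apply: lerD.
    apply: le_trans (Hl _ _ _ Vm Vl hy') _; apply: ler_wpM2l => //.
    apply: ler_powR_delta; first exact: enorm_ge0.
    exact: enorm_le_l1norm.
  apply: le_trans (Hx _ _ _ Vl hy' hy) _; apply: ler_wpM2l => //.
  exact: ler_powR_delta.
rewrite normrM; apply: ler_pM => //; last exact: dPi_bound.
apply: le_trans (ler_normD _ _) _; rewrite mulrDl; apply: lerD.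
  exact: Dx_lipschitz_l.
rewrite -mulrA; apply: le_trans (Dx_lipschitz_x _ Vl hy' hy) _; apply: ler_wpM2l => //.
Qed.

Lemma dPi_hoelder l mu i w : in_ball l -> in_ball mu ->
  `|dPi mu i w - dPi l i w| <= K2 * (powR (l1norm (mu - l)) delta + l1norm (mu - l)).
Proof.
move=> hl hm; have Vl := in_ball_V hl; have Vm := in_ball_V hm.
have t0 := l1norm_ge0 (mu - l).
apply: le_trans _ (dPi_step_error_le t0).
apply: (@contraction_bound R _ shiftw (fun u => `|dPi mu i u - dPi l i u|) _ (K1 + K1)).
- by rewrite Hg0 Hg1.
- exact: dPi_step_error_ge0.
- by move=> u; apply: le_trans (ler_normB _ _) _; apply: lerD; exact: dPi_bound.
- by move=> u; exact: dPi_step.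
Qed.

Definition dPiv l (v : 'rV[R]_d) w := \sum_(i < d) v 0 i * dPi l i w.

Lemma dPiv_bound l v w : V l -> `|dPiv l v w| <= l1norm v * K1.
Proof. by move=> Vl; apply: norm_sum_coord_le => i; exact: dPi_bound. Qed.

Lemma dPiv_shift l v w : V l -> dPiv l v w =
  \sum_(i < d) v 0 i * Dl f i (w 0%N) l (Pi f a l (shiftw w))
  + Dx f (w 0%N) l (Pi f a l (shiftw w)) * dPiv l v (shiftw w).
Proof.
move=> Vl; rewrite /dPiv mulr_sumr -big_split /=; apply: eq_bigr => i _.
by rewrite (dPi_shift i w Vl) mulrDr mulrCA.
Qed.

Definition K3 := (C + C * powR K1 delta + C * K1 ^+ 2) / (1 - gamma2).

Definition Pi_step_error (t : R) :=
  C * t * powR t delta + t * (C * powR (K1 * t) delta) + C * (K1 * t) ^+ 2.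

Lemma Pi_step_error_ge0 t : 0 <= t -> 0 <= Pi_step_error t.
Proof.
move=> t0; have k := K1_ge0.
have q1 : 0 <= C * t * powR t delta by rewrite !mulr_ge0 ?powR_ge0.
have q2 : 0 <= t * (C * powR (K1 * t) delta) by rewrite !mulr_ge0 ?powR_ge0.
have q3 : 0 <= C * (K1 * t) ^+ 2 by rewrite mulr_ge0 ?sqr_ge0.
rewrite /Pi_step_error; lra.
Qed.

Lemma Pi_step_error_le t : 0 <= t ->
  Pi_step_error t / (1 - gamma2) <= K3 * (t * (powR t delta + t)).
Proof.
move=> t0; have k0 := K1_ge0.
have pK : powR (K1 * t) delta = powR K1 delta * powR t delta by rewrite powRM ?K1_ge0.
set P := powR t delta; have P0 : 0 <= P by exact: powR_ge0.
have pk0 : 0 <= powR K1 delta by exact: powR_ge0.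
rewrite /K3 mulrAC; apply: ler_wpM2r; first by rewrite invr_ge0 ltW // one_sub_gamma2_gt0.
rewrite /Pi_step_error pK exprMn -/P.
have e1 : C * t * P = C * (t * P) by rewrite mulrA.
have e2 : t * (C * (powR K1 delta * P)) = C * powR K1 delta * (t * P) by ring.
have e3 : C * (K1 ^+ 2 * t ^+ 2) = C * K1 ^+ 2 * (t * t) by ring.
rewrite e1 e2 e3 !mulrDl !mulrDr.
have h1 : 0 <= C * (t * t) by rewrite !mulr_ge0.
have h2 : 0 <= C * powR K1 delta * (t * t) by rewrite !mulr_ge0.
have h3 : 0 <= C * K1 ^+ 2 * (t * P).
  by apply: mulr_ge0; [apply: mulr_ge0 => //; apply: exprn_ge0|apply: mulr_ge0].
lra.
Qed.

Lemma Pi_step l mu u : in_ball l -> in_ball mu ->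
  `|Pi f a mu u - Pi f a l u - dPiv l (mu - l) u| <= Pi_step_error (l1norm (mu - l))
    + gamma2 * `|Pi f a mu (shiftw u) - Pi f a l (shiftw u) - dPiv l (mu - l) (shiftw u)|.
Proof.
move=> hl hm; have Vl := in_ball_V hl; have Vm := in_ball_V hm.
set t := l1norm (mu - l).
rewrite (Pi_shift u Vl) (Pi_shift u Vm) (dPiv_shift _ u Vl).
set y := Pi f a l (shiftw u); set y' := Pi f a mu (shiftw u).
have hy := Pi_in_ab (shiftw u) Vl; have hy' := Pi_in_ab (shiftw u) Vm.
have dy : `|y' - y| <= K1 * t by exact: Pi_lipschitz.
have E1 := taylor_l (u 0%N) hl hm hy'.
set S1 := \sum_(i < d) (mu - l) 0 i * Dl f i (u 0%N) l y'.
set S2 := \sum_(i < d) (mu - l) 0 i * Dl f i (u 0%N) l y.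
have eS : S1 - S2 = \sum_(i < d) (mu - l) 0 i * (Dl f i (u 0%N) l y' - Dl f i (u 0%N) l y).
  by rewrite /S1 /S2 -sumrB; apply: eq_bigr => i _; rewrite mulrBr.
set L := dPiv l (mu - l) (shiftw u).
have -> : f (u 0%N) mu y' - f (u 0%N) l y - (S2 + Dx f (u 0%N) l y * L) =
   (f (u 0%N) mu y' - f (u 0%N) l y' - S1) + (S1 - S2)
   + (f (u 0%N) l y' - f (u 0%N) l y - Dx f (u 0%N) l y * (y' - y))
   + Dx f (u 0%N) l y * (y' - y - L) by ring.
apply: le_trans (ler_normD _ _) _; apply: lerD; last first.
  rewrite normrM; apply: ler_pM => //; exact: Hgam.
apply: le_trans (ler_normD _ _) _; rewrite /Pi_step_error; apply: lerD.
  apply: le_trans (ler_normD _ _) _; apply: lerD; first exact: E1.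
  rewrite eS; apply: norm_sum_coord_le => i.
  have [_ _ _ /(_ i) [_ _ [Hx _] _]] := HB (u 0%N).
  apply: le_trans (Hx _ _ _ Vl hy' hy) _; apply: ler_wpM2l => //.
  exact: ler_powR_delta.
apply: le_trans (taylor_x _ Vl hy' hy) _; apply: ler_wpM2l => //.
by rewrite !expr2; apply: ler_pM.
Qed.

Lemma Pi_taylor l mu w : in_ball l -> in_ball mu ->
  `|Pi f a mu w - Pi f a l w - dPiv l (mu - l) w| <=
     K3 * (l1norm (mu - l) * (powR (l1norm (mu - l)) delta + l1norm (mu - l))).
Proof.
move=> hl hm; have Vl := in_ball_V hl; have Vm := in_ball_V hm.
have t0 := l1norm_ge0 (mu - l).
apply: le_trans _ (Pi_step_error_le t0).
apply: (@contraction_bound R _ shiftw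
  (fun u => `|Pi f a mu u - Pi f a l u - dPiv l (mu - l) u|) _
  ((b - a) + l1norm (mu - l) * K1)).
- by rewrite Hg0 Hg1.
- exact: Pi_step_error_ge0.
- move=> u; apply: le_trans (ler_normB _ _) _; apply: lerD; last exact: dPiv_bound.
  have /andP[h1 h2] := Pi_in_ab u Vl; have /andP[h3 h4] := Pi_in_ab u Vm.
  rewrite ler_norml; apply/andP; split; lra.
- by move=> u; exact: Pi_step.
Qed.

Lemma K2_ge0 : 0 <= K2.
Proof.
have k := K1_ge0; have g := one_sub_gamma2_gt0.
have h1 : 0 <= C * powR K1 delta by apply: mulr_ge0 => //; exact: powR_ge0.
have h2 : 0 <= C * K1 by apply: mulr_ge0.
have h3 : 0 <= (C + C * K1) * K1 by apply: mulr_ge0; [exact: addr_ge0|exact: k].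
rewrite /K2; apply: divr_ge0; last exact: ltW.
by apply: addr_ge0 => //; apply: addr_ge0.
Qed.

Lemma K3_ge0 : 0 <= K3.
Proof.
have k := K1_ge0; have g := one_sub_gamma2_gt0.
have h1 : 0 <= C * powR K1 delta by apply: mulr_ge0 => //; exact: powR_ge0.
have h3 : 0 <= C * K1 ^+ 2 by apply: mulr_ge0 => //; exact: exprn_ge0.
rewrite /K3; apply: divr_ge0; last exact: ltW.
by apply: addr_ge0 => //; apply: addr_ge0.
Qed.

Lemma dPivZ l (h : R) v w : dPiv l (h *: v) w = h * dPiv l v w.
Proof. by rewrite /dPiv mulr_sumr; apply: eq_bigr => i _; rewrite mxE mulrA. Qed.

Lemma dPiv_ebasis l i w : dPiv l (ebasis R i) w = dPi l i w.
Proof.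
rewrite /dPiv (bigD1 i) //= ebasisE eqxx mul1r big1 ?addr0 // => j ji.
by rewrite ebasisE eq_sym (negbTE ji) mul0r.
Qed.

Lemma dPiv_hoelder l mu v w : in_ball l -> in_ball mu ->
  `|dPiv mu v w - dPiv l v w| <= l1norm v * (K2 * (powR (l1norm (mu - l)) delta + l1norm (mu - l))).
Proof.
move=> hl hm; rewrite /dPiv -sumrB; under eq_bigr do rewrite -mulrBr.
by apply: norm_sum_coord_le => i; apply: dPi_hoelder.
Qed.

Lemma Pi_diff_lipschitz l mu w t : in_ball l -> in_ball mu ->
  `|(Pi f a mu w - Pi f a mu t) - (Pi f a l w - Pi f a l t)| <= 2 * K1 * l1norm (mu - l).
Proof.
move=> hl hm.
have h1 := Pi_lipschitz w hl hm; have h2 := Pi_lipschitz t hl hm.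
have -> : Pi f a mu w - Pi f a mu t - (Pi f a l w - Pi f a l t) =
  (Pi f a mu w - Pi f a l w) - (Pi f a mu t - Pi f a l t) by ring.
apply: le_trans (ler_normB _ _) _; lra.
Qed.

Lemma Pi_diff_line_derive (q v : 'rV[R]_d) (s : R) (w t : nat -> 'I_m) : in_ball (q + s *: v) ->
  derivable (fun s' : R => Pi f a (q + s' *: v) w - Pi f a (q + s' *: v) t) s 1 /\
  derive1 (fun s' : R => Pi f a (q + s' *: v) w - Pi f a (q + s' *: v) t) s
    = dPiv (q + s *: v) v w - dPiv (q + s *: v) v t.
Proof.
move=> hl; set l := q + s *: v.
set nv := l1norm v; have nv0 : 0 <= nv by exact: l1norm_ge0.
have k3 := K3_ge0.
have rho0 : 0 < (r - l1norm (l - lam0)) / (nv + 1).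
  by rewrite divr_gt0 ?subr_gt0 // ltr_wpDl.
apply: (@derive1_from_remainder R delta Hdel _ s _ (2 * K3 * nv * powR nv delta) (2 * K3 * nv * nv) _ rho0).
- by apply: mulr_ge0; [apply: mulr_ge0; [apply: mulr_ge0|]|apply: powR_ge0].
- by apply: mulr_ge0; [apply: mulr_ge0; [apply: mulr_ge0|]|].
move=> h hn hr.
have hmu : in_ball (l + h *: v).
  rewrite /in_ball.
  have H1 : l1norm (l + h *: v - lam0) <= l1norm (l - lam0) + `|h| * nv.
    by rewrite addrAC; apply: le_trans (l1normD _ _) _; rewrite l1normZ.
  have H3 : `|h| * nv <= `|h| * (nv + 1) by rewrite ler_wpM2l ?lerDl.
  have H2 : `|h| * (nv + 1) < r - l1norm (l - lam0).
    by rewrite -ltr_pdivlMr ?ltr_wpDl.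
  lra.
have eq1 : q + (h + s) *: v = l + h *: v by rewrite /l scalerDl [h *: v + _]addrC addrA.
rewrite eq1.
have Ew := Pi_taylor w hl hmu; have Et := Pi_taylor t hl hmu.
have hp : powR (`|h| * nv) delta = powR `|h| delta * powR nv delta by rewrite powRM.
rewrite [l + _ - l]addrAC subrr add0r l1normZ dPivZ -/l -/nv hp in Ew.
rewrite [l + _ - l]addrAC subrr add0r l1normZ dPivZ -/l -/nv hp in Et.
have -> : Pi f a (l + h *: v) w - Pi f a (l + h *: v) t - (Pi f a l w - Pi f a l t)
   - h * (dPiv l v w - dPiv l v t) =
   (Pi f a (l + h *: v) w - Pi f a l w - h * dPiv l v w)
   - (Pi f a (l + h *: v) t - Pi f a l t - h * dPiv l v t) by ring.
apply: le_trans (ler_normB _ _) _.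
have -> : `|h| * (2 * K3 * nv * powR nv delta * powR `|h| delta + 2 * K3 * nv * nv * `|h|) =
   K3 * (`|h| * nv * (powR `|h| delta * powR nv delta + `|h| * nv)) +
   K3 * (`|h| * nv * (powR `|h| delta * powR nv delta + `|h| * nv)) by ring.
exact: lerD.
Qed.

Lemma in_ball_center : in_ball lam0.
Proof. by rewrite /in_ball subrr l1norm0. Qed.

Lemma dPiv_diffE l v w t :
  dPiv l v w - dPiv l v t = edot v (\row_i (dPi l i w - dPi l i t)).
Proof.
rewrite /dPiv /edot -sumrB; apply: eq_bigr => i _; rewrite !mxE; ring.
Qed.

Lemma grad_Pi_diff w t :
  grad (fun l => Pi f a l w - Pi f a l t) lam0 = \row_i (dPi lam0 i w - dPi lam0 i t).
Proof.
apply/rowP => i; rewrite !mxE deriveE_derive1.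
have W0 : in_ball (lam0 + 0 *: ebasis R i) by rewrite scale0r addr0; exact: in_ball_center.
have [_ hD] := @Pi_diff_line_derive lam0 (ebasis R i) 0 w t W0.
by apply: eq_trans hD _; rewrite scale0r addr0 !dPiv_ebasis.
Qed.

Lemma Pi_diff_ge_half l w t (eta : R) : in_ball l ->
  4 * (K1 * l1norm (l - lam0)) <= eta ->
  eta <= `|Pi f a lam0 w - Pi f a lam0 t| -> eta / 2 <= `|Pi f a l w - Pi f a l t|.
Proof.
move=> hl hs hF.
have := Pi_diff_lipschitz w t in_ball_center hl.
have := lerB_dist (Pi f a lam0 w - Pi f a lam0 t) (Pi f a l w - Pi f a l t).
rewrite distrC; lra.
Qed.

Lemma dPiv_diff_ge_half l e w t (eta : R) : in_ball l -> l1norm e <= d%:R ->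
  4 * (d%:R * K2 * (powR (l1norm (l - lam0)) delta + l1norm (l - lam0))) <= eta ->
  eta <= `|dPiv lam0 e w - dPiv lam0 e t| -> eta / 2 <= `|dPiv l e w - dPiv l e t|.
Proof.
move=> hl he hs hD0.
set E := d%:R * K2 * (powR (l1norm (l - lam0)) delta + l1norm (l - lam0)).
have hB u : `|dPiv l e u - dPiv lam0 e u| <= E.
  apply: le_trans (dPiv_hoelder e u in_ball_center hl) _; rewrite /E mulrA.
  apply: ler_wpM2r; first by rewrite addr_ge0 ?powR_ge0 ?l1norm_ge0.
  by apply: ler_wpM2r => //; exact: K2_ge0.
have hE : `|(dPiv lam0 e w - dPiv lam0 e t) - (dPiv l e w - dPiv l e t)| <= E + E.
  have -> : (dPiv lam0 e w - dPiv lam0 e t) - (dPiv l e w - dPiv l e t) =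
    (dPiv l e t - dPiv lam0 e t) - (dPiv l e w - dPiv lam0 e w) by ring.
  by apply: le_trans (ler_normB _ _) _; apply: lerD.
have := lerB_dist (dPiv lam0 e w - dPiv lam0 e t) (dPiv l e w - dPiv l e t).
rewrite -/E in hs; lra.
Qed.

Lemma small_radius (eta : R) : 0 < eta -> exists2 m0 : R, 0 < m0 <= r &
  forall s, 0 <= s < m0 ->
    4 * (K1 * s) <= eta /\ 4 * (d%:R * K2 * (powR s delta + s)) <= eta.
Proof.
move=> eta0.
have k1 := K1_ge0; have k2 := K2_ge0.
set X := d%:R * K2.
have X0 : 0 <= X by rewrite mulr_ge0.
set tau := eta / (8 * (X + 1)).
have tau0 : 0 < tau by rewrite divr_gt0 // mulr_gt0 //; lra.
have htau : tau * (8 * (X + 1)) = eta by rewrite divfK // gt_eqF // mulr_gt0 //; lra.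
have [rho rho0 Hrho] := powR_lt_small Hdel tau0.
set c1 := eta / (4 * (K1 + 1)).
have c10 : 0 < c1 by rewrite divr_gt0 // mulr_gt0 //; lra.
have hc1 : c1 * (4 * (K1 + 1)) = eta by rewrite divfK // gt_eqF // mulr_gt0 //; lra.
exists (Num.min (Num.min r c1) (Num.min rho tau)).
  by rewrite !lt_min Hr c10 rho0 tau0 !ge_min lexx.
move=> s /andP[s0]; rewrite !lt_min => /andP[/andP[_ sc] /andP[srho stau]].
have hP := Hrho s s0 srho.
split.
  have : K1 * s <= K1 * c1 by apply: ler_wpM2l => //; exact: ltW.
  have e1 : c1 * (4 * (K1 + 1)) = 4 * (K1 * c1) + 4 * c1 by ring.
  lra.
have : X * (powR s delta + s) <= X * (2 * tau) by apply: ler_wpM2l => //; lra.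
have e1 : tau * (8 * (X + 1)) = 8 * (X * tau) + 8 * tau by ring.
lra.
Qed.

Lemma local_transversality (U : set 'rV[R]_d) (eta : R) :
  (0 < d)%N -> 0 < eta -> MT f U a eta ->
  (forall l, l1norm (l - lam0) < 3 * r -> U l) ->
  exists eps0 : R, 0 < eps0 /\
    (forall l, enorm (l - lam0) < eps0 -> U l) /\
    forall w t : nat -> 'I_m, w 0%N != t 0%N ->
    exists e : 'rV[R]_d, enorm e = 1 /\
      forall p : 'rV[R]_d, enorm p < eps0 -> edot p e = 0 ->
      forall s : R, enorm (p + s *: e) < eps0 ->
        let g := fun s' : R => Pi f a (lam0 + p + s' *: e) w
                              - Pi f a (lam0 + p + s' *: e) t in
        `|g s| < eta / 2 -> derivable g s 1 /\ eta / 2 <= `|derive1 g s|.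
Proof.
move=> d0 eta0 HMT HU.
have [m0 /andP[m00 m0r] Hsmall] := small_radius eta0.
have dd0 : 0 < d%:R :> R by rewrite ltr0n.
have near_lam0 (v : 'rV[R]_d) : enorm v < m0 / d%:R -> l1norm v < m0.
  move=> hv; apply: le_lt_trans (l1norm_le_enorm v) _.
  by rewrite mulrC -ltr_pdivlMr.
have small_l p s (e : 'rV[R]_d) : enorm (p + s *: e) < m0 / d%:R ->
    in_ball (lam0 + p + s *: e) /\ 0 <= l1norm (lam0 + p + s *: e - lam0) < m0.
  rewrite /in_ball; have -> : lam0 + p + s *: e - lam0 = p + s *: e.
    by apply/eqP; rewrite subr_eq [_ + lam0]addrC addrA.
  move=> /near_lam0 hl; rewrite l1norm_ge0; split => //; lra.
exists (m0 / d%:R); split; first by rewrite divr_gt0.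
split; first by move=> l /near_lam0 hl; apply: HU; lra.
move=> w t hwt.
case: (ltP `|Pi f a lam0 w - Pi f a lam0 t| eta) => HF.
- set G : 'rV[R]_d := \row_i (dPi lam0 i w - dPi lam0 i t).
  have hG : eta <= enorm G.
    rewrite /G -grad_Pi_diff; apply: HMT hwt HF.
    by apply/subset_closure/HU; rewrite subrr l1norm0; lra.
  have G0 : 0 < enorm G by apply: lt_le_trans hG.
  exists ((enorm G)^-1 *: G); split; first exact: enorm_normalize.
  move=> p _ _ s hs g _.
  have [hl /Hsmall [_ hK2]] := small_l _ _ _ hs.
  have [der ->] := Pi_diff_line_derive w t hl.
  split => //; apply: dPiv_diff_ge_half => //.
    by apply: le_trans (l1norm_le_enorm _) _; rewrite enorm_normalize // mulr1.
  by rewrite dPiv_diffE edot_normalize // ger0_norm // ltW.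
- exists (ebasis R (Ordinal d0)); split; first exact: enorm_ebasis.
  move=> p _ _ s hs g hg.
  have [hl /Hsmall [hK1 _]] := small_l _ _ _ hs.
  have := Pi_diff_ge_half hl hK1 HF; move: hg; rewrite /g /=; lra.
Qed.

End NaturalProjection.

Unset Implicit Arguments.

Theorem mainTheorem11 (R : realType) (d m : nat) (a b : R)
  (f : 'I_m -> 'rV[R]_d -> R -> R) (U V : set 'rV[R]_d)
  (delta gamma1 gamma2 eta : R) :
  (0 < d)%N -> a < b ->
  open U -> (exists M : R, forall l, U l -> enorm l <= M) ->
  open V -> closure U `<=` V ->
  0 < delta < 1 -> 0 < gamma1 -> gamma1 <= gamma2 -> gamma2 < 1 ->
  MA f V a b delta gamma1 gamma2 ->
  0 < eta -> MT f U a eta ->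
  forall lam0, U lam0 ->
  exists eps0 : R, 0 < eps0 /\
    (forall l, enorm (l - lam0) < eps0 -> U l) /\
    forall w t : nat -> 'I_m, w 0%N != t 0%N ->
    exists e : 'rV[R]_d, enorm e = 1 /\
      forall p : 'rV[R]_d, enorm p < eps0 -> edot p e = 0 ->
      forall s : R, enorm (p + s *: e) < eps0 ->
        let g := fun s' : R => Pi f a (lam0 + p + s' *: e) w
                              - Pi f a (lam0 + p + s' *: e) t in
        `|g s| < eta / 2 -> derivable g s 1 /\ eta / 2 <= `|derive1 g s|.
Proof.
move=> d0 ab oU _ _ clUV /andP[del0 _] g10 g12 g21 HMA eta0 HMT lam0 Ul0.
case: HMA => Hmap Hder [C HBC] Hgam.
have HB : regularity_bounds f V a b delta (Num.max C 0).
  by apply: regularity_bounds_le HBC; rewrite le_max lexx.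
have C0 : 0 <= Num.max C 0 by rewrite le_max lexx orbT.
have Hgam2 j lam x : V lam -> a <= x <= b -> `|Dx f j lam x| <= gamma2.
  by move=> Vl hx; have /andP[] := Hgam j lam x Vl hx.
have g20 : 0 <= gamma2 by apply: ltW; apply: lt_le_trans g12.
have [r0 r00 Hr0] := open_l1ball oU Ul0.
have r0' : 0 < r0 / 3 by rewrite divr_gt0.
have e3 : 3 * (r0 / 3) = r0 by rewrite mulrC divfK.
have HU l : l1norm (l - lam0) < 3 * (r0 / 3) -> U l by rewrite e3; exact: Hr0.
have Hball l : l1norm (l - lam0) < 3 * (r0 / 3) -> V l by move=> /HU /subset_closure /clUV.
exact: (local_transversality (ltW ab) del0 g20 g21 C0 Hmap Hder HB Hgam2 r0' Hball
  d0 eta0 HMT HU).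
Qed.
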